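(* Let $A$ be a Büchi automaton over $2^{AP}$, $\varphi$ an LTL formula, and $A'$ a Büchi automaton with $\mathcal{L}(A')=\mathcal{L}(A)\cap\{\pi\mid\pi\models\varphi\}$. Then $\mathrm{Cn}_{LTL}(\mathrm{supp}(A)\cup\{\varphi\})=\mathrm{supp}(A')$.
   Context: Fix a finite nonempty $AP$. LTL formulae $\varphi::=\bot\mid p\mid\neg\varphi\mid\varphi\lor\varphi\mid X\varphi\mid\varphi U\varphi$ with the standard semantics on traces $\pi\in(2^{AP})^\omega$. Kripke structures $M=(S,I,T,\lambda)$ (finite $S$, nonempty $I$, left-total $T$, $\lambda:S\to 2^{AP}$); $M\models\varphi$ iff all traces of $M$ satisfy $\varphi$; $\mathrm{Cn}_{LTL}(X)$ = formulae satisfied by every Kripke structure satisfying all of $X$. Büchi automata over alphabet $2^{AP}$ accept infinite words via runs from initial states visiting recurrence states infinitely often; $\mathcal{L}(A)$ is the language. $\mathrm{supp}(A):=\{\psi\mid\pi\models\psi\ \forall\pi\in\mathcal{L}(A)\}$. *)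

From mathcomp Require Import all_boot.
Unset Strict Implicit. Unset Printing Implicit Defensive.

Section LTL.
Variable AP : finType.

Definition letter := {set AP}.
Definition trace := nat -> letter.

Inductive ltl : Type :=
| LFalse : ltl
| LAtom : AP -> ltl
| LNot : ltl -> ltl
| LOr : ltl -> ltl -> ltl
| LNext : ltl -> ltl
| LUntil : ltl -> ltl -> ltl.

Definition suffix (pi : trace) (k : nat) : trace := fun n => pi (k + n).

Fixpoint models (pi : trace) (phi : ltl) : Prop :=
  match phi with
  | LFalse => False
  | LAtom p => p \in pi 0
  | LNot f => ~ models pi f
  | LOr f g => models pi f \/ models pi g
  | LNext f => models (suffix pi 1) f
  | LUntil f g => exists k, models (suffix pi k) g /\
                    forall j, j < k -> models (suffix pi j) f
  end.

Record kripke := Kripke {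
  kS : finType;
  kI : {set kS};
  kT : rel kS;
  klab : kS -> letter;
  kI_nonempty : kI != set0;
  kT_total : forall s, exists s', kT s s'
}.

Definition kpath (M : kripke) (r : nat -> kS M) : Prop :=
  r 0 \in kI M /\ forall i, kT M (r i) (r i.+1).

Definition ktrace (M : kripke) (pi : trace) : Prop :=
  exists r : nat -> kS M, kpath M r /\ forall i, pi i = klab M (r i).

Definition kmodels (M : kripke) (phi : ltl) : Prop :=
  forall pi, ktrace M pi -> models pi phi.

Definition Cn (X : ltl -> Prop) (phi : ltl) : Prop :=
  forall M : kripke, (forall psi, X psi -> kmodels M psi) -> kmodels M phi.

Record buchi := Buchi {
  bQ : finType;
  binit : {set bQ};
  bdelta : bQ -> letter -> bQ -> bool;
  bacc : {set bQ}
}.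

Definition accepting_run (A : buchi) (w : trace) (r : nat -> bQ A) : Prop :=
  r 0 \in binit A /\ (forall i, bdelta A (r i) (w i) (r i.+1)) /\
  (forall n, exists m, n <= m /\ r m \in bacc A).

Definition lang (A : buchi) (w : trace) : Prop :=
  exists r, accepting_run A w r.

Definition supp (A : buchi) (psi : ltl) : Prop :=
  forall pi, lang A pi -> models pi psi.

End LTL.
Arguments LFalse {AP}.
Arguments models {AP}.
Arguments lang {AP}.
Arguments supp {AP}.
Arguments Cn {AP}.
Arguments kmodels {AP}.
Arguments ktrace {AP}.

From Pilot Require Import Defs.
From mathcomp Require Import all_boot.
From mathcomp Require Import zify.
From Stdlib Require List.
From Stdlib Require Import Classical ClassicalEpsilon FunctionalExtensionality.

(* If pi is accepted by A and satisfies phi, cut it at positions i < j where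
   the run visits the same state, an accepting state is seen in between, all
   subformulas of phi and psi have the same truth value, and every Until
   subformula true at i is fulfilled before j.  The lasso word
   pi[0,i) pi[i,j)^omega is then accepted by A, agrees with pi on phi and psi,
   and is the only trace of a Kripke structure; that structure satisfies
   supp(A) and phi, hence psi.  Conversely, if psi is in supp(A') then
   ~phi \/ psi is in supp(A), so psi follows from supp(A) and phi. *)

Set Implicit Arguments.

Arguments LAtom {AP}. Arguments LNot {AP}. Arguments LOr {AP}.
Arguments LNext {AP}. Arguments LUntil {AP}.
Arguments bQ {AP}. Arguments binit {AP}. Arguments bdelta {AP}. Arguments bacc {AP}.

Section LassoPosition.
Variables i j : nat.

(* [lasso_pos n] is the position of the original word read by the n-th letter
   of the lasso with stem [0, i) and loop [i, j). *)
Definition lasso_next (x : nat) : nat := if x.+1 == j then i else x.+1.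

Fixpoint lasso_pos (n : nat) : nat :=
  if n is n'.+1 then lasso_next (lasso_pos n') else 0.

Lemma lasso_posS (n : nat) :
  lasso_pos n.+1 = (lasso_pos n).+1 \/ (lasso_pos n).+1 = j /\ lasso_pos n.+1 = i.
Proof. by rewrite /= /lasso_next; case: eqP; [right | left]. Qed.

Lemma lasso_posD (n m : nat) :
  lasso_pos n + m < j -> lasso_pos (n + m) = lasso_pos n + m.
Proof.
elim: m => [|m IH] lt_nm_j; first by rewrite !addn0.
by rewrite addnS /= IH /lasso_next; [case: eqP; lia | lia].
Qed.

Hypothesis lt_ij : i < j.

Lemma lasso_next_lt (x : nat) : x < j -> lasso_next x < j.
Proof. by rewrite /lasso_next; case: eqP => //; lia. Qed.

Lemma lasso_pos_lt (n : nat) : lasso_pos n < j.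
Proof. by elim: n => [|n IH] /=; [lia | exact: lasso_next_lt]. Qed.

Lemma lasso_pos_wrap (n : nat) : lasso_pos (n + (j - lasso_pos n)) = i.
Proof.
have lt_nj := lasso_pos_lt n.
have -> : j - lasso_pos n = (j - lasso_pos n).-1.+1 by lia.
by rewrite addnS /= lasso_posD /lasso_next; [case: eqP; lia | lia].
Qed.

End LassoPosition.

Section Semantics.
Variable AP : finType.
Implicit Types (p : trace AP) (f g h : ltl AP).

Definition holds p f (n : nat) : Prop := models (Defs.suffix AP p n) f.

Lemma suffixD p a b : Defs.suffix AP (Defs.suffix AP p a) b = Defs.suffix AP p (a + b).
Proof. by apply: functional_extensionality => x; rewrite /Defs.suffix addnA. Qed.

Lemma holds0 p f : holds p f 0 <-> models p f.
Proof.
by rewrite /holds; have -> : Defs.suffix AP p 0 = p by apply: functional_extensionality.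
Qed.

Lemma holds_atom p a n : holds p (LAtom a) n <-> a \in p n.
Proof. by rewrite /holds /= /Defs.suffix addn0. Qed.

Lemma holds_next p f n : holds p (LNext f) n <-> holds p f n.+1.
Proof. by rewrite /holds /= suffixD addn1. Qed.

Lemma holds_until p g h n : holds p (LUntil g h) n <->
  exists k, holds p h (n + k) /\ forall m, m < k -> holds p g (n + m).
Proof.
rewrite /holds /=; split=> -[k [Hh Hg]]; exists k;
  by split; [move: Hh | move=> m /Hg]; rewrite suffixD.
Qed.

Lemma until_now p g h n : holds p h n -> holds p (LUntil g h) n.
Proof. by move=> Hh; apply/holds_until; exists 0; rewrite addn0. Qed.

Lemma until_step p g h n :
  holds p g n -> holds p (LUntil g h) n.+1 -> holds p (LUntil g h) n.
Proof.
move=> Hg /holds_until [k [Hh Hgk]]; apply/holds_until; exists k.+1; split.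
  by rewrite addnS -addSn.
by case=> [|m] lt_mk; [rewrite addn0 | rewrite addnS -addSn; apply: Hgk].
Qed.

Lemma until_back p g h n d :
  holds p (LUntil g h) (n + d) -> (forall m, m < d -> holds p g (n + m)) ->
  holds p (LUntil g h) n.
Proof.
elim: d n => [|d IH] n; first by rewrite addn0.
move=> HU Hg; apply: until_step; first by rewrite -[n]addn0; apply: Hg.
apply: IH => [|m lt_md]; first by rewrite addSn -addnS.
by rewrite addSn -addnS; apply: Hg.
Qed.

Lemma until_forward p g h n k m :
  holds p h (n + k) -> (forall m, m < k -> holds p g (n + m)) -> m <= k ->
  holds p (LUntil g h) (n + m).
Proof.
move=> Hh Hg le_mk; apply/holds_until; exists (k - m); split.
  by rewrite -addnA subnKC.
by move=> m' lt_m'; rewrite -addnA; apply: Hg; lia.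
Qed.

Fixpoint subformulas f : seq (ltl AP) :=
  f :: match f with
       | LNot g | LNext g => subformulas g
       | LOr g h | LUntil g h => subformulas g ++ subformulas h
       | _ => [::]
       end.

Fixpoint hereditary (P : ltl AP -> Prop) f : Prop :=
  P f /\ match f with
         | LNot g | LNext g => hereditary P g
         | LOr g h | LUntil g h => hereditary P g /\ hereditary P h
         | _ => True
         end.

Lemma hereditary_self (P : ltl AP -> Prop) f : hereditary P f -> P f.
Proof. by case: f => [|a|g|g h|g|g h] []. Qed.

Lemma hereditary_subformulas (P : ltl AP -> Prop) f :
  (forall g, List.In g (subformulas f) -> P g) -> hereditary P f.
Proof.
elim: f => [|a|g IH|g IHg h IHh|g IH|g IHg h IHh] /= Psub;
  split; try (by apply: Psub; left); try done;
  try (by apply: IH => x Hx; apply: Psub; right).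
all: by split; [apply: IHg | apply: IHh] => x Hx; apply: Psub; right;
  apply: List.in_or_app; [left | right].
Qed.

End Semantics.

Section LassoWord.
Variable AP : finType.
Variable p : trace AP.
Variables i j : nat.
Implicit Types (f g h : ltl AP).

Definition lasso : trace AP := fun n => p (lasso_pos i j n).

Definition until_fulfilled_before f : Prop :=
  if f is LUntil g h then
    holds p f i -> exists k, i + k < j /\ holds p h (i + k) /\
                             forall m, m < k -> holds p g (i + m)
  else True.

Definition agree f : Prop := (holds p f i <-> holds p f j) /\ until_fulfilled_before f.

Lemma agree_shift f n :
  agree f -> holds p f (lasso_pos i j n.+1) <-> holds p f (lasso_pos i j n).+1.
Proof. by case=> eq_ij _; case: (lasso_posS i j n) => [-> | [-> ->]]. Qed.

Hypothesis lt_ij : i < j.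

Section Until.
Variables g h : ltl AP.
Hypothesis lasso_g : forall n, holds lasso g n <-> holds p g (lasso_pos i j n).
Hypothesis lasso_h : forall n, holds lasso h n <-> holds p h (lasso_pos i j n).
Hypothesis agree_until : agree (LUntil g h).

Lemma lasso_until_within k n :
  lasso_pos i j n + k < j -> holds p h (lasso_pos i j n + k) ->
  (forall m, m < k -> holds p g (lasso_pos i j n + m)) ->
  holds lasso (LUntil g h) n.
Proof.
elim: k n => [|k IH] n lt_nk_j Hh Hg.
  by apply: until_now; apply/lasso_h; rewrite -[lasso_pos _ _ _]addn0.
have posS : lasso_pos i j n.+1 = lasso_pos i j n + 1.
  by rewrite -addn1 lasso_posD //; lia.
apply: until_step; first by apply/lasso_g; rewrite -[lasso_pos _ _ _]addn0; apply: Hg.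
apply: IH; rewrite posS; first lia.
  by rewrite -addnA add1n.
by move=> m lt_mk; rewrite -addnA add1n; apply: Hg.
Qed.

Lemma holds_until_of_lasso n :
  holds lasso (LUntil g h) n -> holds p (LUntil g h) (lasso_pos i j n).
Proof.
move=> /holds_until [k [Hh Hg]]; elim: k n Hh Hg => [|k IH] n Hh Hg.
  by apply: until_now; apply/lasso_h; rewrite -[n]addn0.
apply: until_step; first by apply/lasso_g; rewrite -[n]addn0; apply: Hg.
apply/(agree_shift n agree_until)/IH; first by rewrite addSn -addnS.
by move=> m lt_mk; rewrite addSn -addnS; apply: Hg.
Qed.

(* If the witness of the Until lies beyond the loop end j, it is replaced by
   the witness fulfilling the Until at i, which the lasso reaches when it
   wraps around. *)
Lemma holds_lasso_of_until n :
  holds p (LUntil g h) (lasso_pos i j n) -> holds lasso (LUntil g h) n.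
Proof.
move=> /holds_until [k [Hh Hg]].
have lt_nj := lasso_pos_lt i j lt_ij n.
case: (ltnP (lasso_pos i j n + k) j) => [lt_k | ge_k].
  exact: lasso_until_within lt_k Hh Hg.
set d := j - lasso_pos i j n.
have until_j : holds p (LUntil g h) j.
  have -> : j = lasso_pos i j n + d by rewrite /d; lia.
  by apply: until_forward Hh Hg _; rewrite /d; lia.
have /(proj2 agree_until) [k' [lt_k' [Hh' Hg']]] := proj2 (proj1 agree_until) until_j.
apply: (@until_back _ _ _ _ n d).
  by apply: (@lasso_until_within k' (n + d)); rewrite /d (lasso_pos_wrap _ _ lt_ij).
move=> m lt_md; apply/lasso_g; rewrite lasso_posD; last by rewrite /d in lt_md; lia.
by apply: Hg; rewrite /d in lt_md; lia.
Qed.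

End Until.

Lemma holds_lasso f :
  hereditary agree f -> forall n, holds lasso f n <-> holds p f (lasso_pos i j n).
Proof.
elim: f => [|a|g IH|g IHg h IHh|g IH|g IHg h IHh] /= [agree_f sub_f] n.
- by [].
- by rewrite !holds_atom.
- by have := IH sub_f n; rewrite /holds /=; tauto.
- case: sub_f => /IHg lasso_g /IHh lasso_h.
  by have := lasso_g n; have := lasso_h n; rewrite /holds /=; tauto.
- by rewrite !holds_next (IH sub_f); apply: agree_shift; exact: hereditary_self sub_f.
- case: sub_f => /IHg lasso_g /IHh lasso_h.
  by split; [apply: holds_until_of_lasso | apply: holds_lasso_of_until].
Qed.

End LassoWord.

Section LassoCut.
Variable AP : finType.
Implicit Types (p : trace AP) (L : seq (ltl AP)).

Lemma lang_lasso (A : buchi AP) p (r : nat -> bQ A) i j a :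
  i < j -> r 0 \in binit A -> (forall n, bdelta A (r n) (p n) (r n.+1)) ->
  r i = r j -> i <= a < j -> r a \in bacc A -> lang A (lasso p i j).
Proof.
move=> lt_ij r0 r_step r_loop /andP[le_ia lt_aj] r_acc.
exists (fun n => r (lasso_pos i j n)); split; first by [].
split=> [n | N].
  rewrite /lasso; case: (lasso_posS i j n) => [-> | [pos_j ->]].
    exact: r_step (lasso_pos i j n).
  by have := r_step (lasso_pos i j n); rewrite pos_j -r_loop.
exists (N + (j - lasso_pos i j N) + (a - i)); split; first lia.
by rewrite lasso_posD (lasso_pos_wrap _ _ lt_ij) ?subnKC; lia.
Qed.

Lemma lasso_kripke p i j : i < j ->
  exists M : kripke AP, ktrace M (lasso p i j) /\ forall q, ktrace M q -> q = lasso p i j.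
Proof.
move=> lt_ij; have lt_0j : 0 < j by lia.
have init_ne : [set s : 'I_j | val s == 0] != set0.
  by apply/set0Pn; exists (Ordinal lt_0j); rewrite inE.
have step_total : forall s : 'I_j, exists s' : 'I_j, val s' == lasso_next i j (val s).
  by move=> s; exists (Ordinal (lasso_next_lt i j lt_ij _ (ltn_ord s))).
exists (@Kripke AP 'I_j [set s : 'I_j | val s == 0]
          (fun s s' => val s' == lasso_next i j (val s)) (fun s => p (val s))
          init_ne step_total).
split=> [|q [r [[r0 r_step] r_lab]]].
  exists (fun n => Ordinal (lasso_pos_lt i j lt_ij n)).
  by split; [split=> [|n] | move=> n]; rewrite ?inE /=.
have r_pos : forall n, val (r n) = lasso_pos i j n.
  elim=> [|n IH]; first by move: r0; rewrite inE => /eqP.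
  by move/eqP: (r_step n) => /= ->; rewrite IH.
by apply: functional_extensionality => n; rewrite r_lab /= r_pos.
Qed.

Lemma exists_recurrent_value (X : finType) (u : nat -> X) :
  exists x, forall N, exists n, N <= n /\ u n = x.
Proof.
apply: NNPP => no_recurrent.
have eventually_avoids : forall s : seq X, exists N, forall n, N <= n -> u n \notin s.
  elim=> [|x s [M HM]]; first by exists 0.
  have [N' HN'] : exists N', forall n, N' <= n -> u n != x.
    apply: NNPP => H; apply: no_recurrent; exists x => N; apply: NNPP => HN'.
    by apply: H; exists N => n le_Nn; apply/eqP => ux; apply: HN'; exists n.
  by exists (maxn M N') => n le_n; rewrite in_cons negb_or HN' ?HM //; lia.
have [N HN] := eventually_avoids (enum X).
by move: (HN N (leqnn N)); rewrite mem_enum.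
Qed.

Definition truth (P : Prop) : bool :=
  if excluded_middle_informative P then true else false.

Lemma truth_inj (P Q : Prop) : truth P = truth Q -> (P <-> Q).
Proof. by rewrite /truth; do 2 case: excluded_middle_informative => //; tauto. Qed.

Lemma until_fulfilled_before_mono p i K K' f :
  K <= K' -> until_fulfilled_before p i K f -> until_fulfilled_before p i K' f.
Proof.
case: f => //= g h le_K H /H [k [lt_k Hk]]; exists k; split; [lia | exact: Hk].
Qed.

Lemma until_fulfilled_bound p i L :
  exists K, forall f, List.In f L -> until_fulfilled_before p i K f.
Proof.
elim: L => [|f L [K HK]]; first by exists 0.
have [K1 H1] : exists K1, until_fulfilled_before p i K1 f.
  case: f => [|a|g|g h|g|g h]; try by exists 0.
  case: (classic (holds p (LUntil g h) i)) => [HU | notU]; last by exists 0.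
  have [k Hk] := proj1 (holds_until _ _ _ _) HU.
  by exists (i + k).+1 => _; exists k.
exists (maxn K K1) => f' [<- | in_f'].
  by apply: until_fulfilled_before_mono H1; lia.
by apply: until_fulfilled_before_mono (HK f' in_f'); lia.
Qed.

(* Pigeonhole on the pair (state of the run, truth values of L) picks i and
   a later j with the same pair, past an accepting visit and past every
   Until witness needed at i. *)
Lemma exists_lasso_cut (A : buchi AP) p (r : nat -> bQ A) L :
  (forall n, exists m, n <= m /\ r m \in bacc A) ->
  exists i j a, [/\ i < j, r i = r j, i <= a < j, r a \in bacc A &
                    forall f, List.In f L -> agree p i j f].
Proof.
move=> r_acc.
pose profile (n : nat) : bQ A * {ffun 'I_(size L) -> bool} :=
  (r n, [ffun k : 'I_(size L) => truth (holds p (List.nth k L LFalse) n)]).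
have [x Hx] := exists_recurrent_value _ profile.
have [i [_ prof_i]] := Hx 0.
have [K HK] := until_fulfilled_bound p i L.
have [a [le_ia acc_a]] := r_acc i.
have [j [le_j prof_j]] := Hx (maxn K a.+1).
move: prof_i; rewrite -prof_j /profile => -[r_ij truth_ij].
exists i, j, a; split; rewrite ?le_ia //=; try lia.
move=> f in_f; split; last by apply: until_fulfilled_before_mono (HK f in_f); lia.
have [k [lt_k nth_k]] := List.In_nth L f LFalse in_f.
move/ffunP: truth_ij => /(_ (Ordinal (introT ltP lt_k))).
by rewrite !ffunE /= nth_k; apply: truth_inj.
Qed.

Lemma lang_lasso_agree (A : buchi AP) p L : lang A p ->
  exists i j, [/\ i < j, lang A (lasso p i j) &
                 forall f, List.In f L -> models (lasso p i j) f <-> models p f].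
Proof.
move=> [r [r0 [r_step r_acc]]].
have [i [j [a [lt_ij r_loop lt_a acc_a agree_ij]]]] :=
  exists_lasso_cut A p r (List.flat_map (@subformulas AP) L) r_acc.
exists i, j; split=> //; first exact: lang_lasso r_step r_loop lt_a acc_a.
move=> f in_f; rewrite -!holds0 holds_lasso //.
apply: hereditary_subformulas => g in_g; apply: agree_ij.
by apply/List.in_flat_map; exists f.
Qed.

End LassoCut.

Lemma supp_subset_Cn (AP : finType) (A A' : buchi AP) (phi psi : ltl AP) :
  (forall pi, lang A' pi <-> lang A pi /\ models pi phi) ->
  supp A' psi -> Cn (fun chi => supp A chi \/ chi = phi) psi.
Proof.
move=> langA' supp_psi M M_models pi pi_M.
have imp_M : kmodels M (LOr (LNot phi) psi).
  apply: M_models; left=> w w_A /=.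
  by case: (classic (models w phi)) => [w_phi | ]; [right; apply/supp_psi/langA' | left].
have phi_M : kmodels M phi by apply: M_models; right.
by case: (imp_M pi pi_M) => // /(_ (phi_M pi pi_M)).
Qed.

Lemma Cn_subset_supp (AP : finType) (A A' : buchi AP) (phi psi : ltl AP) :
  (forall pi, lang A' pi <-> lang A pi /\ models pi phi) ->
  Cn (fun chi => supp A chi \/ chi = phi) psi -> supp A' psi.
Proof.
move=> langA' Cn_psi pi /langA' [pi_A pi_phi].
have [i [j [lt_ij lasso_A lasso_agree]]] := lang_lasso_agree [:: phi; psi] pi_A.
have [M [lasso_M M_traces]] := lasso_kripke pi i j lt_ij.
apply/(lasso_agree psi); first by right; left.
apply: (Cn_psi M) lasso_M => chi [supp_chi | ->] q /M_traces ->.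
  exact: supp_chi lasso_A.
by apply/lasso_agree; first by left.
Qed.

Theorem mainTheorem14 (AP : finType) (hAP : 0 < #|AP|)
  (A : buchi AP) (phi : ltl AP) (A' : buchi AP)
  (hA' : forall pi : trace AP, lang A' pi <-> (lang A pi /\ models pi phi)) :
  forall psi : ltl AP,
    Cn (fun chi => supp A chi \/ chi = phi) psi <-> supp A' psi.
Proof.
by move=> psi; split; [exact: Cn_subset_supp hA' | exact: supp_subset_Cn hA'].
Qed.
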